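(* Let $X$ be a proper, geodesically complete, $\delta$-hyperbolic Busemann space, vertically convergent with respect to $\infty_X$, with height function $h_X$ based at $\infty_X$, and let $d'_X$ be defined from an admissible monotone norm $N$. There is a constant $C$ depending only on $\delta$ such that for any points $p,q\in X$, any $d'_X$-geodesic $\gamma'$ from $p$ to $q$ and any $d_X$-geodesic $\gamma$ from $p$ to $q$, the total variations of $h_X$ satisfy $V_{\gamma'}(h_X)\ge V_\gamma(h_X)-C$.
   Context: $V_c(h_X)$ is the total variation of $h_X$ along a path $c$. $d'_X$ is the length metric on $X$ with path length $\sup_{0=t_0<\dots<t_n=1}\sum_iN(d_X(\gamma(t_i),\gamma(t_{i+1})),|h_X(\gamma(t_i))-h_X(\gamma(t_{i+1}))|)$, where $N$ is a norm on $\mathbb{R}^2$ with $N(1,1)=1$, $N(a,b)\ge(|a|+|b|)/2$, non-decreasing in each coordinate on $[0,\infty)^2$. *)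

From HB Require Import structures.
From mathcomp Require Import all_boot all_order all_algebra.
From mathcomp Require Import all_classical all_reals all_analysis.
Set Implicit Arguments. Unset Strict Implicit. Unset Printing Implicit Defensive.
Import Order.TTheory GRing.Theory Num.Theory.
Import numFieldNormedType.Exports.
Local Open Scope classical_set_scope.
Local Open Scope ring_scope.

Section Defs.
Context {R : realType} {X : metricType R}.
Local Notation d := (@mdist R X).

Definition proper_space : Prop :=
  forall (x : X) (r : R), compact [set y | d x y <= r].

Definition geodesic_for (D : X -> X -> R) (p q : X) (c : R -> X) : Prop :=
  [/\ c 0 = p, c 1 = q &
      forall s t, 0 <= s <= 1 -> 0 <= t <= 1 -> D (c s) (c t) = `|s - t| * D p q].

Definition egeodesic_for (D : X -> X -> \bar R) (p q : X) (c : R -> X) : Prop :=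
  [/\ c 0 = p, c 1 = q &
      forall s t, 0 <= s <= 1 -> 0 <= t <= 1 ->
        D (c s) (c t) = (`|s - t|%:E * D p q)%E].

Definition geodesic_space : Prop :=
  forall p q : X, exists c : R -> X, geodesic_for d p q c.

Definition busemann_space : Prop :=
  geodesic_space /\
  forall (p1 q1 p2 q2 : X) (c1 c2 : R -> X),
    geodesic_for d p1 q1 c1 -> geodesic_for d p2 q2 c2 ->
    forall t, 0 <= t <= 1 -> d (c1 t) (c2 t) <= (1 - t) * d p1 p2 + t * d q1 q2.

Definition geodesically_complete : Prop :=
  forall (a b : R) (c : R -> X), a <= b ->
    (forall s t, a <= s <= b -> a <= t <= b -> d (c s) (c t) = `|s - t|) ->
    exists c' : R -> X, (forall s t, d (c' s) (c' t) = `|s - t|) /\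
                        (forall t, a <= t <= b -> c' t = c t).

Definition gromov_product (w x y : X) : R := (d x w + d y w - d x y) / 2.

Definition hyperbolic (delta : R) : Prop :=
  forall w x y z : X,
    Num.min (gromov_product w x y) (gromov_product w y z) - delta
      <= gromov_product w x z.

Definition geodesic_ray (c : R -> X) : Prop :=
  forall s t, 0 <= s -> 0 <= t -> d (c s) (c t) = `|s - t|.

(** [c] and [r] define the same boundary point *)
Definition asymptotic_rays (c r : R -> X) : Prop :=
  exists B : R, forall t, 0 <= t -> d (c t) (r t) <= B.

(** vertical convergence w.r.t. the boundary point defined by the ray [r]:
    any two rays asymptotic to [r] eventually converge to each other
    (after a time shift). *)
Definition vertically_convergent (r : R -> X) : Prop :=
  forall c1 c2 : R -> X, geodesic_ray c1 -> geodesic_ray c2 ->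
    asymptotic_rays c1 r -> asymptotic_rays c2 r ->
    exists a : R, (fun t => d (c1 t) (c2 (t + a))) @ +oo --> (0 : R).

(** height function based at the boundary point of [r]
    (minus the Busemann function of [r]) *)
Definition height (r : R -> X) (x : X) : R :=
  lim ((fun t => t - d x (r t)) @ +oo).

Definition admissible_monotone_norm (N : R -> R -> R) : Prop :=
  [/\ (forall a b, 0 <= N a b),
      (forall a b, N a b = 0 -> a = 0 /\ b = 0),
      (forall l a b, N (l * a) (l * b) = `|l| * N a b) &
      (forall a b a' b', N (a + a') (b + b') <= N a b + N a' b')] /\
  [/\ N 1 1 = 1,
      (forall a b, (`|a| + `|b|) / 2 <= N a b) &
      (forall a b a' b', 0 <= a -> 0 <= b -> a <= a' -> b <= b' ->
         N a b <= N a' b')].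

Definition Nlength (N : R -> R -> R) (h : X -> R) (c : R -> X) : \bar R :=
  ereal_sup [set (\sum_(0 <= n < size s)
                    N (d (c (nth 1 (0 :: s) n)) (c (nth 1 (0 :: s) n.+1)))
                      `|h (c (nth 1 (0 :: s) n)) - h (c (nth 1 (0 :: s) n.+1))|)%:E
            | s in itv_partition 0 1].

Definition dprime (N : R -> R -> R) (h : X -> R) (x y : X) : \bar R :=
  ereal_inf [set Nlength N h c | c in
    [set c : R -> X | [/\ c 0 = x, c 1 = y & {within `[0, 1], continuous c}]]].

Definition path_variation (f : X -> R) (c : R -> X) : \bar R :=
  total_variation 0 1 (f \o c).

End Defs.

From mathcomp Require Import all_boot all_order all_algebra.
From mathcomp Require Import all_classical all_reals all_analysis.
From mathcomp Require Import ring lra.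
Set Implicit Arguments. Unset Strict Implicit. Unset Printing Implicit Defensive.
Import Order.TTheory GRing.Theory Num.Theory.
Import numFieldNormedType.Exports.
Local Open Scope classical_set_scope.
Local Open Scope ring_scope.

(* Write h for the height, f := h \o gamma' and A s t := (f s + f t + d (gamma' s) (gamma' t)) / 2
   for the height of the "apex" of gamma' s and gamma' t, i.e. minus the Gromov product based at
   the boundary point; delta-hyperbolicity makes A a delta-ultrametric. Since N a b >= (a + b) / 2
   and gamma' has d'-length P <= d p q, 2 A s t <= f s + f t + 2 (t - s) P - |f s - f t|. Split
   [0, 1] at a maximum tau of f and then repeatedly at points halving the slack
   (t - s) P - (2 max f - f s - f t); each split costs 2 delta, and two rounds give
   d p q = 2 A 0 1 - f 0 - f 1 <= (f tau - f 0) + (f tau - f 1) + 20 delta <= V_gamma'(h).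
   On the other hand V_gamma(h) <= d p q because h is 1-Lipschitz. *)

Lemma lipschitz_within_continuous (R : realType) (X : metricType R) (a b L : R)
    (g : R -> X) :
  (forall s t, a <= s <= b -> a <= t <= b -> mdist (g s) (g t) <= L * `|s - t|) ->
  {within `[a, b], continuous g}.
Proof.
move=> Lg; apply/subspace_continuousP => x; rewrite /= in_itv /= => xab.
apply/metricType_numDomainType.cvgrPdist_lt => e e0.
have L1 : 0 < `|L| + 1 by rewrite ltr_pwDr.
have near_x : \forall t \near x, `|x - t| < e / (`|L| + 1).
  exact: (@cvgr_dist_lt _ _ _ (nbhs x) _ id x cvg_id _ (divr_gt0 e0 L1)).
rewrite near_withinE; near=> t; rewrite /= in_itv /= => tab.
apply: le_lt_trans (Lg x t xab tab) _.
have L_le : L <= `|L| + 1 by rewrite (le_trans (ler_norm L)) // lerDl.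
apply: (@le_lt_trans _ _ ((`|L| + 1) * `|x - t|)); first by rewrite ler_wpM2r.
by rewrite mulrC -ltr_pdivlMr //; near: t.
Unshelve. all: by end_near.
Qed.

Lemma partition_sum_le (R : realDomainType) (a b D : R) (F : R -> R -> R)
    (s : seq R) :
  itv_partition a b s ->
  (forall u v, a <= u <= b -> a <= v <= b -> F u v <= `|v - u| * D) ->
  \sum_(0 <= n < size s) F (nth b (a :: s) n) (nth b (a :: s) n.+1)
    <= (b - a) * D.
Proof.
move=> ps F_le.
have in_ab n : (n < (size s).+1)%N -> a <= nth b (a :: s) n <= b.
  by move=> ns; rewrite (itv_partition_nth_ge ns ps) (itv_partition_nth_le ns ps).
rewrite -(nondecreasing_variation (f := id) _ ps) //= /variation mulr_suml.
apply: ler_sum_nat => n /andP[_ ns]; apply: F_le; first exact/in_ab/ltnW.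
exact: (in_ab n.+1).
Qed.

(* Abstract form of the halving argument: [f] plays h \o gamma' and [A] the apex height along
   a d'-geodesic gamma' of d'-length [P]. *)
Section ApexAlongPath.
Variables (R : realType) (delta P : R) (f : R -> R) (A : R -> R -> R).
Implicit Types (s t z tau x m a b c e : R) (j : nat).
Hypotheses (delta_ge0 : 0 <= delta) (P_ge0 : 0 <= P).
Hypothesis f_lip :
  forall s t : R, 0 <= s <= 1 -> 0 <= t <= 1 -> `|f s - f t| <= P * `|s - t|.
Hypothesis apex_le : forall s t : R, 0 <= s -> s <= t -> t <= 1 ->
  2 * A s t <= f s + f t + 2 * ((t - s) * P) - `|f s - f t|.
Hypothesis apex_ultra : forall s z t : R, 0 <= s -> s <= z -> z <= t -> t <= 1 ->
  A s t <= Num.max (A s z) (A z t) + delta.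

(* The slack of [apex_le] relative to the maximum [m] of [f] on [[s, t]]. *)
Definition excess s t m := (t - s) * P - (2 * m - f s - f t).

Lemma excess_ge0 s t m : 0 <= s -> s <= t -> t <= 1 ->
  f s = m \/ f t = m -> 0 <= excess s t m.
Proof.
move=> s0 st t1 fm.
have : `|f s - f t| <= P * `|s - t| by apply: f_lip; apply/andP; split; lra.
rewrite [`|s - t|]distrC [`|t - s|]ger0_norm ?subr_ge0 //.
rewrite /excess ler_norml => /andP[? ?]; case: fm => <-; lra.
Qed.

Lemma tilted_continuous c e a b : `|c| <= P -> 0 <= a -> b <= 1 ->
  {within `[a, b], continuous (fun z => c * z + f z + e)}.
Proof.
move=> cP a0 b1; apply: (@lipschitz_within_continuous _ R^o _ _ (P + P)).
move=> x y /andP[ax xb] /andP[ay yb]; rewrite /mdist /=.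
have -> : c * y + f y + e - (c * x + f x + e) = c * (y - x) + (f y - f x) by ring.
rewrite mulrDl (le_trans (ler_normD _ _)) // lerD //.
  by rewrite normrM [`|y - x|]distrC ler_wpM2r.
by rewrite [`|f y - f x|]distrC f_lip //; apply/andP; split; lra.
Qed.

Lemma f_continuous a b : 0 <= a -> b <= 1 -> {within `[a, b], continuous f}.
Proof.
move=> a0 b1; apply: (@lipschitz_within_continuous _ R^o _ _ P).
by move=> x y /andP[ax xb] /andP[ay yb]; rewrite /mdist /= distrC f_lip //;
   apply/andP; split; lra.
Qed.

Lemma excess_halving_left s t : 0 <= s -> s <= t -> t <= 1 ->
  exists2 z, s <= z <= t & excess s z (f s) = excess s t (f s) / 2.
Proof.
move=> s0 st t1; have E0 := excess_ge0 s0 st t1 (or_introl erefl).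
pose g z := P * z + f z + - (P * s + f s).
have gE z : g z = excess s z (f s) by rewrite /g /excess; ring.
have g_cont : {within `[s, t], continuous g}.
  by apply: tilted_continuous; rewrite ?ger0_norm.
have g_range : Num.min (g s) (g t) <= excess s t (f s) / 2 <= Num.max (g s) (g t).
  have gs0 : g s = 0 by rewrite /g; ring.
  by rewrite gs0 gE ge_min le_max; apply/andP; split; apply/orP; [left|right]; lra.
have [z /[!in_itv] /= zst gz] := IVT st g_cont g_range.
by exists z => //; rewrite -gE.
Qed.

Lemma excess_halving_right s t : 0 <= s -> s <= t -> t <= 1 ->
  exists2 z, s <= z <= t & excess z t (f t) = excess s t (f t) / 2.
Proof.
move=> s0 st t1; have E0 := excess_ge0 s0 st t1 (or_intror erefl).
pose g z := - P * z + f z + (P * t - f t).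
have gE z : g z = excess z t (f t) by rewrite /g /excess; ring.
have g_cont : {within `[s, t], continuous g}.
  by apply: tilted_continuous; rewrite ?normrN ?ger0_norm.
have g_range : Num.min (g s) (g t) <= excess s t (f t) / 2 <= Num.max (g s) (g t).
  have gt0 : g t = 0 by rewrite /g; ring.
  by rewrite gt0 gE ge_min le_max; apply/andP; split; apply/orP; [right|left]; lra.
have [z /[!in_itv] /= zst gz] := IVT st g_cont g_range.
by exists z => //; rewrite -gE.
Qed.

Definition apex_bound_at_endpoint (j : nat) :=
  forall s t m : R, 0 <= s -> s <= t -> t <= 1 ->
  (forall x : R, s <= x -> x <= t -> f x <= m) -> f s = m \/ f t = m ->
  A s t <= m + excess s t m / 2 ^+ j + 2 * delta * j%:R.

Definition apex_bound_at_peak (j : nat) :=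
  forall s tau t : R, 0 <= s -> s <= tau -> tau <= t -> t <= 1 ->
  (forall x : R, s <= x -> x <= t -> f x <= f tau) ->
  A s t <= f tau + excess s t (f tau) / 2 ^+ j + 2 * delta * j%:R + delta.

Lemma ler_div_pow2 (x y : R) j : x <= y -> x / 2 ^+ j <= y / 2 ^+ j.
Proof. by move=> xy; rewrite ler_wpM2r // invr_ge0 exprn_ge0. Qed.

Lemma apex_bound_at_endpoint0 : apex_bound_at_endpoint 0.
Proof.
move=> s t m s0 st t1 f_le fm; rewrite expr0 divr1 mulr0 addr0.
have fsm : f s <= m by apply: f_le; lra.
have ftm : f t <= m by apply: f_le; lra.
have := apex_le s0 st t1; rewrite /excess.
by case: fm => fm; [rewrite (ger0_norm (_ : 0 <= f s - f t)) |
  rewrite (ler0_norm (_ : f s - f t <= 0))]; lra.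
Qed.

Lemma apex_bound_at_peak_of_endpoint j :
  apex_bound_at_endpoint j -> apex_bound_at_peak j.
Proof.
move=> endpoint_j s tau t s0 stau taut t1 f_le.
have tau0 : 0 <= tau by lra.
have tau1 : tau <= 1 by lra.
have left_bound := endpoint_j s tau (f tau) s0 stau tau1
  (fun x sx xtau => f_le x sx (le_trans xtau taut)) (or_intror erefl).
have right_bound := endpoint_j tau t (f tau) tau0 taut t1
  (fun x taux xt => f_le x (le_trans stau taux) xt) (or_introl erefl).
have E_left := excess_ge0 s0 stau tau1 (or_intror erefl).
have E_right := excess_ge0 tau0 taut t1 (or_introl erefl).
have E_split : excess s tau (f tau) + excess tau t (f tau) = excess s t (f tau).
  by rewrite /excess; ring.
have le_left : excess s tau (f tau) / 2 ^+ j <= excess s t (f tau) / 2 ^+ j.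
  by apply: ler_div_pow2; lra.
have le_right : excess tau t (f tau) / 2 ^+ j <= excess s t (f tau) / 2 ^+ j.
  by apply: ler_div_pow2; lra.
have := apex_ultra s0 stau taut t1.
by case: (leP (A s tau) (A tau t)) => _; lra.
Qed.

Lemma apex_bound_at_endpoint_left j :
  apex_bound_at_endpoint j -> apex_bound_at_peak j ->
  forall s t, 0 <= s -> s <= t -> t <= 1 ->
  (forall x, s <= x -> x <= t -> f x <= f s) ->
  A s t <= f s + excess s t (f s) / 2 / 2 ^+ j + 2 * delta * j%:R + 2 * delta.
Proof.
move=> endpoint_j peak_j s t s0 st t1 f_le.
have [z /andP[sz zt] E_half] := excess_halving_left s0 st t1.
have z0 : 0 <= z by lra.
have z1 : z <= 1 by lra.
have [tau /[!in_itv] /= /andP[ztau taut] tau_max] :=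
  EVT_max zt (f_continuous z0 t1).
have f_le_tau x : z <= x -> x <= t -> f x <= f tau.
  by move=> zx xt; apply: tau_max; rewrite in_itv /= zx xt.
have ftau_le : f tau <= f s by apply: f_le; lra.
have fz_le : f z <= f tau by apply: f_le_tau.
have left_bound := endpoint_j s z (f s) s0 sz z1
  (fun x sx xz => f_le x sx (le_trans xz zt)) (or_introl erefl).
have right_bound := peak_j z tau t z0 ztau taut t1 f_le_tau.
have E_split : excess s t (f s) =
    excess s z (f s) + excess z t (f tau) + 2 * (f tau - f z).
  by rewrite /excess; ring.
have le_right : excess z t (f tau) / 2 ^+ j <= excess s t (f s) / 2 / 2 ^+ j.
  by apply: ler_div_pow2; lra.
rewrite E_half in left_bound.
have := apex_ultra s0 sz zt t1.
have := delta_ge0; case: (leP (A s z) (A z t)) => _; lra.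
Qed.

Lemma apex_bound_at_endpoint_right j :
  apex_bound_at_endpoint j -> apex_bound_at_peak j ->
  forall s t, 0 <= s -> s <= t -> t <= 1 ->
  (forall x, s <= x -> x <= t -> f x <= f t) ->
  A s t <= f t + excess s t (f t) / 2 / 2 ^+ j + 2 * delta * j%:R + 2 * delta.
Proof.
move=> endpoint_j peak_j s t s0 st t1 f_le.
have [z /andP[sz zt] E_half] := excess_halving_right s0 st t1.
have z0 : 0 <= z by lra.
have z1 : z <= 1 by lra.
have [tau /[!in_itv] /= /andP[stau tauz] tau_max] :=
  EVT_max sz (f_continuous s0 z1).
have f_le_tau x : s <= x -> x <= z -> f x <= f tau.
  by move=> sx xz; apply: tau_max; rewrite in_itv /= sx xz.
have ftau_le : f tau <= f t by apply: f_le; lra.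
have fz_le : f z <= f tau by apply: f_le_tau.
have right_bound := endpoint_j z t (f t) z0 zt t1
  (fun x zx xt => f_le x (le_trans sz zx) xt) (or_intror erefl).
have left_bound := peak_j s tau z s0 stau tauz z1 f_le_tau.
have E_split : excess s t (f t) =
    excess s z (f tau) + excess z t (f t) + 2 * (f tau - f z).
  by rewrite /excess; ring.
have le_left : excess s z (f tau) / 2 ^+ j <= excess s t (f t) / 2 / 2 ^+ j.
  by apply: ler_div_pow2; lra.
rewrite E_half in right_bound.
have := apex_ultra s0 sz zt t1.
have := delta_ge0; case: (leP (A s z) (A z t)) => _; lra.
Qed.

Lemma apex_bound_at_endpointS j :
  apex_bound_at_endpoint j -> apex_bound_at_endpoint j.+1.
Proof.
move=> endpoint_j s t m s0 st t1 f_le fm.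
have peak_j := apex_bound_at_peak_of_endpoint endpoint_j.
have halve x : x / 2 ^+ j.+1 = x / 2 / 2 ^+ j by rewrite exprS invfM mulrA.
have -> : 2 * delta * j.+1%:R = 2 * delta * j%:R + 2 * delta.
  by rewrite -[j.+1%:R]natr1 mulrDr mulr1.
rewrite halve addrA.
case: fm f_le => <- f_le.
- exact: apex_bound_at_endpoint_left.
- exact: apex_bound_at_endpoint_right.
Qed.

Lemma apex_bound_at_endpoint_all j : apex_bound_at_endpoint j.
Proof.
elim: j => [|j]; [exact: apex_bound_at_endpoint0 | exact: apex_bound_at_endpointS].
Qed.

Lemma exists_peak_variation D : P <= D -> 2 * A 0 1 = f 0 + f 1 + D ->
  exists2 tau, 0 <= tau <= 1 &
    D - 20 * delta <= `|f tau - f 0| + `|f 1 - f tau|.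
Proof.
move=> PD AD.
have [tau /[!in_itv] /= tau01 tau_max] :=
  EVT_max ler01 (f_continuous (lexx 0) (lexx 1)).
exists tau => //; have /andP[tau0 tau1] := tau01.
have f_le_tau x : 0 <= x -> x <= 1 -> f x <= f tau.
  by move=> x0 x1; apply: tau_max; rewrite in_itv /= x0 x1.
have := apex_bound_at_peak_of_endpoint (apex_bound_at_endpoint_all 2)
  (lexx 0) tau0 tau1 (lexx 1) f_le_tau.
have := ler_norm (f tau - f 0); have := ler_norm (f tau - f 1).
rewrite [`|f tau - f 1|]distrC /excess expr2; lra.
Qed.

End ApexAlongPath.

Lemma hyperbolic_ge0 (R : realType) (X : metricType R) (x : X) (delta : R) :
  hyperbolic (X := X) delta -> 0 <= delta.
Proof.
move=> /(_ x x x x); rewrite /gromov_product !mdistxx minxx; lra.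
Qed.

Section Height.
Context {R : realType} {X : metricType R} (r : R -> X).
Hypothesis r_ray : geodesic_ray r.
Local Notation d := (@mdist R X).

Lemma height_cvg x : (fun t => t - d x (r t)) @ +oo --> height r x.
Proof.
pose g t := Num.max t 0 - d x (r (Num.max t 0)).
have g_nd : nondecreasing_fun g.
  move=> a b ab; rewrite /g.
  set a' := Num.max a 0; set b' := Num.max b 0.
  have a0 : 0 <= a' by rewrite le_max lexx orbT.
  have b0 : 0 <= b' by rewrite le_max lexx orbT.
  have ab' : a' <= b' by rewrite /a' /b' ge_max !le_max ab lexx /= orbT.
  have := metric_triangle x (r a') (r b').
  by rewrite (r_ray a0 b0) distrC ger0_norm ?subr_ge0 //; lra.
have g_ub : has_ubound (range g).
  exists (d x (r 0)) => _ [t _ <-]; rewrite /g.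
  have t0 : 0 <= Num.max t 0 by rewrite le_max lexx orbT.
  have := metric_triangle (r 0) x (r (Num.max t 0)).
  by rewrite (r_ray (lexx 0) t0) sub0r normrN ger0_norm // metric_sym; lra.
have f_cvg : (fun t => t - d x (r t)) @ +oo --> sup (range g).
  apply: cvg_trans (nondecreasing_cvgr g_nd g_ub); apply: near_eq_cvg.
  near=> t; have t0 : 0 <= t by near: t; apply: nbhs_pinfty_ge; rewrite num_real.
  by rewrite /g (max_idPl t0).
by rewrite /height (cvg_lim _ f_cvg).
Unshelve. all: by end_near.
Qed.

Lemma near_height x e : 0 < e ->
  \forall t \near +oo, `|height r x - (t - d x (r t))| <= e.
Proof. by move=> e0; have := cvgr_dist_le _ _ (@height_cvg x) e e0; apply. Qed.

Lemma height_lipschitz x y : `|height r x - height r y| <= d x y.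
Proof.
apply/ler_addgt0Pr => e e0; have e2 : 0 < e / 2 by rewrite divr_gt0.
near (+oo : set_system R) => t.
have := metric_triangle x y (r t); have := metric_triangle y x (r t).
have : `|height r x - (t - d x (r t))| <= e / 2 by near: t; apply: near_height.
have : `|height r y - (t - d y (r t))| <= e / 2 by near: t; apply: near_height.
rewrite (metric_sym y x) !ler_norml => /andP[? ?] /andP[? ?] ? ?.
by apply/andP; split; lra.
Unshelve. all: by end_near.
Qed.

(* Minus the Gromov product based at the boundary point of [r]. *)
Definition apex_height x y := (height r x + height r y + d x y) / 2.

Lemma apex_height_ultra delta x y z : hyperbolic (X := X) delta ->
  apex_height x z <= Num.max (apex_height x y) (apex_height y z) + delta.
Proof.
move=> hyp; apply/ler_addgt0Pr => e e0; have e2 : 0 < e / 2 by rewrite divr_gt0.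
near (+oo : set_system R) => t.
have hx : `|height r x - (t - d x (r t))| <= e / 2 by near: t; apply: near_height.
have hy : `|height r y - (t - d y (r t))| <= e / 2 by near: t; apply: near_height.
have hz : `|height r z - (t - d z (r t))| <= e / 2 by near: t; apply: near_height.
move: hx hy hz; rewrite !ler_norml => /andP[? ?] /andP[? ?] /andP[? ?].
have := hyp (r t) x y z; rewrite /gromov_product /apex_height.
case: (leP ((height r x + height r y + d x y) / 2)
           ((height r y + height r z + d y z) / 2)) => ?;
  case: (leP ((d x (r t) + d y (r t) - d x y) / 2)
             ((d y (r t) + d z (r t) - d y z) / 2)) => ?; lra.
Unshelve. all: by end_near.
Qed.

End Height.

Section LengthMetric.
Context {R : realType} {X : metricType R} (N : R -> R -> R) (h : X -> R).
Local Notation d := (@mdist R X).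

Lemma dprime_ge x y : ((N (d x y) `|h x - h y|)%:E <= dprime N h x y)%E.
Proof.
apply: le_ereal_inf_tmp => _ [c [c0 c1 _] <-].
apply: ereal_sup_ubound; exists [:: 1]; first exact: itv_partition1 ltr01.
by rewrite /= big_nat1 /= c0 c1.
Qed.

Lemma geodesic_continuous p q c : geodesic_for d p q c ->
  {within `[0, 1], continuous c}.
Proof.
case=> _ _ c_geod; apply: (lipschitz_within_continuous (L := d p q)).
by move=> s t s01 t01; rewrite c_geod // mulrC.
Qed.

Hypothesis N_adm : admissible_monotone_norm N.
Hypothesis h_lip : forall x y, `|h x - h y| <= d x y.

Lemma dprime_le_dist p q c : geodesic_for d p q c ->
  (dprime N h p q <= (d p q)%:E)%E.
Proof.
move=> c_geod; have [c0 c1 c_dist] := c_geod.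
have [[_ _ N_hom _] [N11 _ N_mono]] := N_adm.
apply: (@le_trans _ _ (Nlength N h c)).
  apply: ereal_inf_lbound; exists c => //.
  by split => //; exact: geodesic_continuous c_geod.
apply: ge_ereal_sup => _ [s ps <-]; rewrite lee_fin.
have := partition_sum_le
  (F := fun u v => N (d (c u) (c v)) `|h (c u) - h (c v)|) (D := d p q) ps.
rewrite subr0 mul1r; apply => u v u01 v01.
have duv : d (c u) (c v) = `|v - u| * d p q by rewrite c_dist // distrC.
apply: (@le_trans _ _ (N (d (c u) (c v)) (d (c u) (c v)))).
  by apply: N_mono => //; exact: mdist_ge0.
have := N_hom (d (c u) (c v)) 1 1; rewrite !mulr1 N11 mulr1 ger0_norm ?mdist_ge0 //.
by move=> ->; rewrite duv.
Qed.

Lemma path_variation_le_dist p q c : geodesic_for d p q c ->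
  (path_variation h c <= (d p q)%:E)%E.
Proof.
case=> _ _ c_dist; apply: ge_ereal_sup => _ [v [s ps <-] <-].
rewrite lee_fin.
have := partition_sum_le (F := fun u w => `|h (c w) - h (c u)|) (D := d p q) ps.
rewrite subr0 mul1r; apply => u w u01 w01.
by apply: le_trans (h_lip _ _) _; rewrite c_dist // distrC.
Qed.

Lemma dprime_finite p q c : geodesic_for d p q c ->
  exists2 P, dprime N h p q = P%:E & 0 <= P <= d p q.
Proof.
move=> c_geod; have [[N_ge0 _ _ _] _] := N_adm.
have le_d := dprime_le_dist c_geod.
have ge_N := dprime_ge p q.
have fin : dprime N h p q \is a fin_num.
  rewrite fin_numE; apply/andP; split; apply/eqP => inf.
  - by move: ge_N; rewrite inf leeNy_eq.
  - by move: le_d; rewrite inf leye_eq.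
exists (fine (dprime N h p q)); first by rewrite fineK.
by rewrite -!lee_fin fineK // le_d (le_trans _ ge_N) // lee_fin.
Qed.

Lemma egeodesic_dist_height_le p q c P :
  egeodesic_for (dprime N h) p q c -> dprime N h p q = P%:E ->
  forall s t, 0 <= s <= 1 -> 0 <= t <= 1 ->
  d (c s) (c t) + `|h (c s) - h (c t)| <= 2 * (`|s - t| * P).
Proof.
move=> [_ _ c_dist] dpq s t s01 t01.
have [_ [_ N_lower _]] := N_adm.
have := dprime_ge (c s) (c t); rewrite c_dist // dpq -EFinM lee_fin.
have := N_lower (d (c s) (c t)) `|h (c s) - h (c t)|.
by rewrite normr_id ger0_norm ?mdist_ge0 //; lra.
Qed.

End LengthMetric.

Lemma egeodesic_height_peak (R : realType) (X : metricType R) (r : R -> X)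
    (N : R -> R -> R) (delta : R) (p q : X) (c' c : R -> X) :
  geodesic_ray r -> hyperbolic (X := X) delta -> admissible_monotone_norm N ->
  egeodesic_for (dprime N (height r)) p q c' -> geodesic_for mdist p q c ->
  exists2 tau, 0 <= tau <= 1 &
    mdist p q - 20 * delta <= `|height r (c' tau) - height r (c' 0)|
                              + `|height r (c' 1) - height r (c' tau)|.
Proof.
move=> r_ray hyp N_adm c'_geod c_geod.
have h_lip := height_lipschitz r_ray.
have [P dpq /andP[P_ge0 P_le]] := dprime_finite N_adm h_lip c_geod.
have bound := egeodesic_dist_height_le N_adm c'_geod dpq.
pose f t := height r (c' t).
pose A s t := apex_height r (c' s) (c' t).
have f_lip s t : 0 <= s <= 1 -> 0 <= t <= 1 -> `|f s - f t| <= P * `|s - t|.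
  move=> s01 t01; have := bound s t s01 t01; have := h_lip (c' s) (c' t).
  by rewrite /f mulrC; lra.
have apex_le s t : 0 <= s -> s <= t -> t <= 1 ->
    2 * A s t <= f s + f t + 2 * ((t - s) * P) - `|f s - f t|.
  move=> s0 st t1.
  have s01 : 0 <= s <= 1 by apply/andP; split; lra.
  have t01 : 0 <= t <= 1 by apply/andP; split; lra.
  have := bound s t s01 t01.
  rewrite [`|s - t|]distrC [`|t - s|]ger0_norm ?subr_ge0 // /A /apex_height /f; lra.
have apex_ultra s z t : 0 <= s -> s <= z -> z <= t -> t <= 1 ->
    A s t <= Num.max (A s z) (A z t) + delta.
  by move=> *; exact: apex_height_ultra.
apply: (exists_peak_variation (hyperbolic_ge0 p hyp) P_ge0 f_lip apex_le
  apex_ultra P_le).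
by case: c'_geod => c'0 c'1 _; rewrite /A /apex_height /f c'0 c'1; field.
Qed.

Theorem mainTheorem10 (R : realType) (delta : R) :
  exists C : R,
  forall (X : metricType R) (r : R -> X) (N : R -> R -> R),
    proper_space (X := X) -> geodesically_complete (X := X) ->
    hyperbolic (X := X) delta -> busemann_space (X := X) ->
    geodesic_ray r -> vertically_convergent r ->
    admissible_monotone_norm N ->
    forall (p q : X) (gamma' gamma : R -> X),
      egeodesic_for (dprime N (height r)) p q gamma' ->
      geodesic_for (@mdist R X) p q gamma ->
      (path_variation (height r) gamma - C%:E <=
         path_variation (height r) gamma')%E.
Proof.
exists (20 * delta) => X r N _ _ hyp _ r_ray _ N_adm p q gamma' gamma
  gamma'_geod gamma_geod.
have [tau /andP[tau0 tau1] peak] :=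
  egeodesic_height_peak r_ray hyp N_adm gamma'_geod gamma_geod.
have V_le := path_variation_le_dist (height_lipschitz r_ray) gamma_geod.
have V'_ge : ((`|height r (gamma' tau) - height r (gamma' 0)|
              + `|height r (gamma' 1) - height r (gamma' tau)|)%:E
             <= path_variation (height r) gamma')%E.
  rewrite /path_variation (total_variationD _ tau0 tau1) EFinD.
  by apply: leeD; exact: total_variation_ge.
apply: le_trans (leeB V_le (lexx _)) _; rewrite -EFinB.
by apply: le_trans V'_ge; rewrite lee_fin.
Qed.
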